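(* Let $\rho$ be an irreducible representation of $\mathcal U=U_h^{2,q}(\mathbb{F}_{q^2})$ in which $H_{2(h-1)}$ acts via a character $\psi$ of conductor $q^2$ (i.e. $1+a\tau^{2(h-1)}$ acts by $\psi(a)$). Then $\rho$ is uniquely determined up to isomorphism by its restriction to $H$: if $\rho'$ is another such irreducible representation with $\rho'|_H\cong\rho|_H$, then $\rho'\cong\rho$.
   Context: Let $p$ be a prime, $q$ a power of $p$, $\ell\ne p$, and $h\ge2$ an integer; representations are over $\overline{\mathbb{Q}}_\ell$. For a commutative $\mathbb{F}_q$-algebra $A$, $U_h^{2,q}(A)$ is the set of formal expressions $1+\sum_{i=1}^{2(h-1)}a_i\tau^i$ ($a_i\in A$) with multiplication obtained by extending $(a\tau^i)(b\tau^j)=ab^{q^i}\tau^{i+j}$ bi-additively, where $\tau^0=1$ and $\tau^k=0$ for $k>2(h-1)$. In $\mathcal U=U_h^{2,q}(\mathbb{F}_{q^2})$ let $H=\{1+\sum a_i\tau^i: a_i=0\text{ for all odd }i\}$ and $H_{2(h-1)}=\{1+a\tau^{2(h-1)}: a\in\mathbb{F}_{q^2}\}$. An additive character $\psi\colon\mathbb{F}_{q^2}\to\overline{\mathbb{Q}}_\ell^\times$ has conductor $q^2$ if there exists $x$ with $\psi(x^q)\ne\psi(x)$. *)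

From HB Require Import structures.
From mathcomp Require Import all_boot all_order all_algebra all_fingroup all_field all_character.
Set Implicit Arguments. Unset Strict Implicit. Unset Printing Implicit Defensive.
Import GRing.Theory.
Local Open Scope ring_scope.

(* Elements 1 + sum_{i=1}^{N} a_i tau^i of U_h^{2,q}(K), N = 2(h-1), are
   encoded by a : {ffun 'I_N -> K}, with a j = coefficient of tau^(j+1). *)

(* coefficient of tau^n (tau^0 = 1, tau^n = 0 for n > N) *)
Definition Ucoef (K : fieldType) (N : nat) (a : {ffun 'I_N -> K}) (n : nat) : K :=
  if n == 0%N then 1 else
  match insub n.-1 with Some j => a j | None => 0 end.

(* product: (a tau^i)(b tau^j) = a b^(q^i) tau^(i+j), extended bi-additively *)
Definition Umul (K : fieldType) (q N : nat) (a b : {ffun 'I_N -> K})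
  : {ffun 'I_N -> K} :=
  [ffun k : 'I_N => \sum_(i < k.+2) Ucoef a i * (Ucoef b (k.+1 - i)%N) ^+ (q ^ i)].

Definition Uevenset (K : finFieldType) (N : nat) : {set {ffun 'I_N -> K}} :=
  [set a : {ffun 'I_N -> K} | [forall j : 'I_N, odd j.+1 ==> (a j == 0)]].

Definition Utop (K : fieldType) (N : nat) (x : K) : {ffun 'I_N -> K} :=
  [ffun j : 'I_N => if j.+1 == N then x else 0].

From HB Require Import structures.
From mathcomp Require Import all_boot all_order all_algebra all_fingroup all_field all_character.
From mathcomp Require Import pgroup zify.
Set Implicit Arguments.
Unset Strict Implicit.
Unset Printing Implicit Defensive.

Import GRing.Theory.
Local Open Scope ring_scope.

(* Irreducible representations of a finite group over an algebraically closed
   field of characteristic 0 are determined by their traces, so it suffices to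
   show that tr rho(g) is determined by rho|_H for every g = 1 + sum a_i tau^i.
   Since |K| = q^2, x^(q^i) only depends on the parity of i.  We induct on the
   depth m of g, the least index with a_m != 0.
   - m odd: conjugating g by some 1 + b tau^(N-m) multiplies it by
     1 + (x - x^q) tau^N, which acts by the scalar psi(x - x^q) != 1, so
     tr rho(g) = 0.
   - m even, a_m in F_q: z = 1 + a_m tau^m is central and lies in H, so it acts
     by the same scalar in rho and rho', and g = z g' with g' deeper.
   - m even, a_m not in F_q: conjugating by 1 + b tau^(d-m) clears an odd
     coefficient a_d (d > m) without changing the lower ones; repeating this
     conjugates g into H. *)

Lemma mx_rsim_mxtrace_irr (F : closedFieldType) (gT : finGroupType) (G : {group gT})
    n n' (r : mx_representation F G n) (r' : mx_representation F G n') :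
  [pchar F] =i pred0 -> mx_irreducible r -> mx_irreducible r' ->
  {in G, forall x, \tr (r x) = \tr (r' x)} -> mx_rsim r r'.
Proof.
move=> ch0 irr irr' tr_eq.
have F'G : pgroup ([pchar F])^' G by apply/pgroupP=> p _ _; rewrite inE /= ch0.
pose sG := DecSocleType (regular_repr F G).
have rs := rsim_irr_comp_pchar sG F'G irr.
have [eqi | nei] := eqVneq (irr_comp sG r) (irr_comp sG r').
  apply: mx_rsim_trans rs _; rewrite eqi.
  exact/mx_rsim_sym/rsim_irr_comp_pchar.
(* The Wedderburn idempotent of the component of [r] acts as 1 in [r] and as 0 in [r']. *)
pose i := irr_comp sG r; pose e := Wedderburn_id i.
have /envelop_mxP[c def_e] : (e \in group_ring F G)%MS.
  by rewrite -(Wedderburn_sum_pchar sG F'G) (sumsmx_sup i) ?Wedderburn_id_mem.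
have tr_e : \tr (gring_op (irr_repr i) e) = \tr (gring_op r' e).
  rewrite def_e !linear_sum; apply: eq_bigr => x Gx.
  by rewrite !linearZ /= !gring_opG // -(mxtrace_rsim rs Gx) tr_eq.
move: tr_e; rewrite op_Wedderburn_id_pchar // mxtrace1.
rewrite (irr_comp'_op0_pchar F'G irr' nei) ?Wedderburn_id_mem // mxtrace0.
move/eqP; rewrite (proj1 (pcharf0P F) ch0) => /eqP d0.
by have := irr_degree_gt0 i; rewrite d0.
Qed.

Lemma sum_ord_support2 (R : nmodType) n (f : nat -> R) j : (0 < j)%N ->
    (forall i, (0 < i <= n)%N -> i != j -> f i = 0) ->
  \sum_(i < n.+1) f i = f 0%N + (if (j <= n)%N then f j else 0).
Proof.
move=> j0 f0; rewrite big_ord_recl; congr (_ + _).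
have f0S (i : 'I_n) : i.+1 != j -> f (bump 0 i) = 0.
  by rewrite /bump leq0n add1n => ne; apply: f0; rewrite ?ltn_ord.
case: leqP => [jn | nj]; last first.
  by rewrite big1 // => i _; apply: f0S; rewrite neq_ltn (leq_ltn_trans (ltn_ord i)).
have lt : (j.-1 < n)%N by rewrite prednK.
rewrite (bigD1 (Ordinal lt)) //= big1 ?addr0; first by rewrite /bump add1n prednK.
by move=> i ne; apply: f0S; apply: contra ne => /eqP ij; apply/eqP/val_inj; rewrite /= -ij.
Qed.

Definition Umono (K : fieldType) (N j : nat) (b : K) : {ffun 'I_N -> K} :=
  [ffun i : 'I_N => if i.+1 == j then b else 0].

Definition Uvanish_below (K : fieldType) N (a : {ffun 'I_N -> K}) m :=
  forall i, (0 < i < m)%N -> Ucoef a i = 0.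

Definition Uodd_vanish_below (K : fieldType) N (a : {ffun 'I_N -> K}) d :=
  forall i, (i < d)%N -> odd i -> Ucoef a i = 0.

Section Coefficients.

Variables (K : fieldType) (q N : nat).
Implicit Types (a b : {ffun 'I_N -> K}) (c : K).

Lemma Uvanish_belowS a m : Uvanish_below a m -> Ucoef a m = 0 -> Uvanish_below a m.+1.
Proof.
move=> a_low am0 i /andP[i0]; rewrite ltnS leq_eqVlt => /predU1P[-> // | im].
by apply: a_low; rewrite i0.
Qed.

Lemma Uodd_vanish_belowS a d :
  Uodd_vanish_below a d -> (odd d -> Ucoef a d = 0) -> Uodd_vanish_below a d.+1.
Proof. by move=> a_odd ad0 i; rewrite ltnS leq_eqVlt => /predU1P[-> | /a_odd]. Qed.

Lemma Uvanish_below_odd a m : Uvanish_below a m -> Uodd_vanish_below a m.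
Proof. by move=> a_low [|i] // im _; apply: a_low. Qed.

Lemma Ucoef0 a : Ucoef a 0 = 1. Proof. by []. Qed.

Lemma Ucoef_ord a (j : 'I_N) : Ucoef a j.+1 = a j.
Proof.
rewrite /Ucoef /=; case: insubP => [k _ kj | /negP]; last by rewrite ltn_ord.
by congr (a _); apply: val_inj.
Qed.

Lemma Ucoef_gt a n : (N < n)%N -> Ucoef a n = 0.
Proof. by case: n => // n Nn; rewrite /Ucoef /= insubF // ltnNge -ltnS Nn. Qed.

Lemma Ucoef_inj a b : (forall n, (0 < n <= N)%N -> Ucoef a n = Ucoef b n) -> a = b.
Proof. by move=> eq_ab; apply/ffunP => j; rewrite -!Ucoef_ord eq_ab /= ?ltn_ord. Qed.

Lemma Ucoef_Umul a b n : (n <= N)%N ->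
  Ucoef (Umul q a b) n = \sum_(i < n.+1) Ucoef a i * Ucoef b (n - i) ^+ (q ^ i).
Proof.
case: n => [|n] nN; first by rewrite big_ord1 /= mul1r expr1.
by rewrite -[n]/(nat_of_ord (Ordinal nN)) Ucoef_ord ffunE.
Qed.

Lemma Ucoef_Umono j c n : (0 < j <= N)%N ->
  Ucoef (Umono N j c) n = if n == 0%N then 1 else if n == j then c else 0.
Proof.
case/andP=> j0 jN; case: n => [|n] //=.
case: (ltnP n N) => [nN | Nn].
  by rewrite -[n]/(nat_of_ord (Ordinal nN)) Ucoef_ord ffunE.
by rewrite Ucoef_gt //; case: eqP => // n1j; move: jN; rewrite -n1j ltnNge Nn.
Qed.

Lemma Ucoef_UmonoMl a j c n : (0 < j <= N)%N -> (n <= N)%N ->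
  Ucoef (Umul q (Umono N j c) a) n =
    Ucoef a n + (if (j <= n)%N then c * Ucoef a (n - j) ^+ (q ^ j) else 0).
Proof.
move=> jN nN; have j0 : (0 < j)%N by case/andP: jN.
pose f i := Ucoef (Umono N j c) i * Ucoef a (n - i) ^+ (q ^ i).
rewrite Ucoef_Umul // (@sum_ord_support2 _ _ f j) //; last first.
  by move=> [|i] // _ ne; rewrite /f Ucoef_Umono // (negPf ne) mul0r.
rewrite /f /= mul1r expn0 expr1 subn0 Ucoef_Umono // eqxx.
by rewrite eqn0Ngt j0.
Qed.

Lemma Ucoef_UmonoMr a j c n : (0 < q)%N -> (0 < j <= N)%N -> (n <= N)%N ->
  Ucoef (Umul q a (Umono N j c)) n =
    Ucoef a n + (if (j <= n)%N then Ucoef a (n - j) * c ^+ (q ^ (n - j)) else 0).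
Proof.
move=> q0 jN nN; have j0 : (0 < j)%N by case/andP: jN.
pose f i := Ucoef a (n - i) * Ucoef (Umono N j c) (n - (n - i)) ^+ (q ^ (n - i)).
rewrite Ucoef_Umul // (reindex_inj rev_ord_inj) /= (@sum_ord_support2 _ _ f j) /f //=.
- rewrite !subn0 subnn expr1n mulr1; congr (_ + _); case: ifP => // jn.
  by rewrite subKn // Ucoef_Umono // eqxx eqn0Ngt j0.
- move=> [|i] // /andP[_ i_n] ne; rewrite subKn // Ucoef_Umono // (negPf ne).
  by rewrite expr0n eqn0Ngt expn_gt0 q0 mulr0.
Qed.

Lemma Uvanish_below_Umono_quot a a' m : (0 < m <= N)%N -> Uvanish_below a m ->
  Umul q (Umono N m (Ucoef a m)) a' = a -> Uvanish_below a' m.+1.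
Proof.
move=> mN a_low def_a i /andP[i0 im].
have iN : (i <= N)%N by case/andP: mN => _; apply: leq_trans.
move/(congr1 (fun x => Ucoef x i)): def_a.
rewrite Ucoef_UmonoMl // leq_eqVlt ltnNge -ltnS im orbF.
have [-> | ne] := eqVneq i m.
  by rewrite subnn Ucoef0 expr1n mulr1 -{2}[Ucoef a m]add0r => /addIr.
by rewrite addr0 => ->; apply: a_low; rewrite i0 ltn_neqAle ne -ltnS.
Qed.

End Coefficients.

Section Conjugation.

Variables (K : finFieldType) (q N : nat).
Hypothesis cardK : #|K| = (q ^ 2)%N.
Implicit Types (a b : {ffun 'I_N -> K}) (c x : K).

Let q_gt0 : (0 < q)%N.
Proof. by case: q cardK => // /card0_eq/(_ 0). Qed.

Lemma expr_qexpn c i : c ^+ (q ^ i) = if odd i then c ^+ q else c.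
Proof.
rewrite -{1}(odd_double_half i) expnD exprM -mul2n.
have -> (d : K) : d ^+ (q ^ (2 * i./2)) = d.
  elim: i./2 => [|t IH]; first by rewrite muln0 expr1.
  by rewrite mulnS expnD exprM -cardK expf_card IH.
by case: (odd i); rewrite ?expn1 ?expr1.
Qed.

Lemma Uconj_odd_depth a m x : ~~ odd N -> (0 < m <= N)%N -> odd m ->
    Uvanish_below a m -> Ucoef a m != 0 ->
  exists y, Umul q y a = Umul q (Umul q a y) (Utop N (x - x ^+ q)).
Proof.
rewrite /Utop -/(Umono N N _).
move=> evenN /andP[m0 mN] oddm a_low am0; set c := Ucoef a m in am0.
have ltmN : (m < N)%N by rewrite ltn_neqAle mN andbT; apply: contraNneq evenN => <-.
set j := (N - m)%N.
have jN : (0 < j <= N)%N by rewrite subn_gt0 ltmN leq_subr.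
have NN : (0 < N <= N)%N by rewrite leqnn (leq_ltn_trans (leq0n _) ltmN).
have oddj : odd j by rewrite oddB // (negPf evenN) oddm.
exists (Umono N j (x / c ^+ q)); apply: Ucoef_inj => n /andP[n0 nN].
have nNN : (n - N <= N)%N by rewrite (leq_trans (leq_subr _ _)).
rewrite Ucoef_UmonoMl // Ucoef_UmonoMr // !Ucoef_UmonoMr //.
have [ltnN | | ->] := ltngtP n N; last 2 first.
- by rewrite ltnNge nN.
- have [j0 jN'] := andP jN; have Nj : (N - j = m)%N by rewrite subKn.
  rewrite jN' subnn leqNgt j0 Nj Ucoef0 addr0 mul1r expr1 !expr_qexpn oddj oddm /=.
  rewrite exprMn exprVn -exprM mulnn expr_qexpn /= -addrA; congr (_ + _).
  by rewrite mulfVK ?expf_neq0 // [c * _]mulrC mulfVK // addrC subrK.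
rewrite addr0; congr (_ + _); case: ifP => // jn.
have [-> | nj0] := posnP (n - j); first by rewrite Ucoef0 expr1n mulr1 mul1r expr1.
by rewrite a_low ?nj0 /=; [rewrite expr0n eqn0Ngt expn_gt0 q_gt0 mul0r mulr0 | lia].
Qed.

Lemma Umono_central m c w : (0 < m <= N)%N -> ~~ odd m -> c ^+ q = c ->
  Umul q (Umono N m c) w = Umul q w (Umono N m c).
Proof.
move=> mN evenm cq; apply: Ucoef_inj => n /andP[_ nN].
rewrite Ucoef_UmonoMl // Ucoef_UmonoMr //; congr (_ + _); case: ifP => // _.
by rewrite !expr_qexpn (negPf evenm); case: ifP; rewrite ?cq mulrC.
Qed.

Lemma Uconj_odd_vanish a m d : (0 < m)%N -> ~~ odd m -> (m < d <= N)%N -> odd d ->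
    Ucoef a m ^+ q != Ucoef a m -> Uvanish_below a m -> Uodd_vanish_below a d ->
  exists y, forall a', Umul q y a = Umul q a' y ->
    [/\ Uvanish_below a' m, Ucoef a' m = Ucoef a m & Uodd_vanish_below a' d.+1].
Proof.
move=> m0 evenm /andP[md dN] oddd cq a_low a_odd; set c := Ucoef a m in cq *.
set j := (d - m)%N.
have jN : (0 < j <= N)%N by rewrite subn_gt0 md /j; lia.
have oddj : odd j by rewrite oddB ?(ltnW md) // oddd (negPf evenm).
have cq0 : c - c ^+ q != 0 by rewrite subr_eq0 eq_sym.
set b := Ucoef a d / (c - c ^+ q).
exists (Umono N j b) => a' conj_a.
have Ec n : Ucoef (Umul q (Umono N j b) a) n = Ucoef (Umul q a' (Umono N j b)) n.
  by rewrite conj_a.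
have low n : (n < d)%N -> Ucoef a' n = Ucoef a n.
  elim/ltn_ind: n => n IH nd; have [-> // | n0] := posnP n.
  move: (Ec n); rewrite Ucoef_UmonoMl ?Ucoef_UmonoMr //; try lia.
  case: ifP => jn; last by rewrite !addr0.
  have [-> | nj0] := posnP (n - j).
    by rewrite Ucoef0 expr1n mulr1 mul1r expr1 => /addIr.
  have ltm : (n - j < m)%N by rewrite /j; lia.
  rewrite (IH (n - j)%N) ?(a_low (n - j)%N) ?nj0 //; try lia.
  by rewrite expr0n eqn0Ngt expn_gt0 q_gt0 mulr0 mul0r => /addIr.
have a'm : Ucoef a' m = c by rewrite low.
have a'd : Ucoef a' d = 0.
  move: (Ec d); rewrite Ucoef_UmonoMl ?Ucoef_UmonoMr // leq_subr.
  have -> : (d - j = m)%N by rewrite /j; lia.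
  rewrite a'm !expr_qexpn oddj (negPf evenm) => /eqP.
  rewrite -subr_eq -addrA [c * b]mulrC -mulrBr -opprB mulrN divfK // subrr.
  by move/eqP.
split=> // [i /andP[i0 im] | i id oddi]; first by rewrite low ?a_low ?i0 //; lia.
by have [lt | | ->] := ltngtP i d; [rewrite low ?a_odd | lia | ].
Qed.

End Conjugation.

Lemma nat_down_ind N (P : nat -> Prop) :
  (forall d, (N < d)%N -> P d) -> (forall d, (d <= N)%N -> P d.+1 -> P d) ->
  forall d, P d.
Proof.
move=> Pbig PS d; have [t] : exists t, (N.+1 - d <= t)%N by exists (N.+1 - d)%N.
elim: t d => [|t IH] d le_dt; first by apply: Pbig; lia.
by have [dN | Nd] := leqP d N; [apply: PS => //; apply: IH; lia | apply: Pbig].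
Qed.

Lemma mxtrace_repr_conjg (F : fieldType) (gT : finGroupType) (G : {group gT}) n
    (r : mx_representation F G n) g x : g \in G -> x \in G ->
  \tr (r (g ^ x)%g) = \tr (r g).
Proof.
move=> Gg Gx; rewrite conjgE !repr_mxM ?groupM ?groupV // mxtrace_mulC.
by rewrite -mulmxA -repr_mxM ?groupV // mulgV repr_mx1 mulmx1.
Qed.

Section Traces.

Variables (K : finFieldType) (F : closedFieldType) (gT : finGroupType) (G : {group gT}).
Variables (q N : nat) (phi : {ffun 'I_N -> K} -> gT) (psi : K -> F).
Hypotheses (cardK : #|K| = (q ^ 2)%N) (evenN : ~~ odd N).
Hypotheses (phi_inj : injective phi) (phiG : G :=: phi @: [set: {ffun 'I_N -> K}]).
Hypothesis phiM : forall a b, phi (Umul q a b) = (phi a * phi b)%g.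
Hypothesis psiD : forall x y, psi (x + y) = psi x * psi y.
Hypothesis psi_conductor : exists x, psi (x ^+ q) != psi x.
Implicit Types (a b y z : {ffun 'I_N -> K}).

Lemma mem_phi a : phi a \in G.
Proof. by rewrite phiG imset_f ?inE. Qed.

Lemma phiP g : g \in G -> exists a, g = phi a.
Proof. by rewrite phiG => /imsetP[a _ ->]; exists a. Qed.

Lemma Umul_divl z a : exists a', Umul q z a' = a.
Proof.
have [a' def_a'] := phiP (groupM (groupVr (mem_phi z)) (mem_phi a)).
by exists a'; apply: phi_inj; rewrite phiM -def_a' mulKVg.
Qed.

Lemma Uconj_exists y b : exists a', Umul q y b = Umul q a' y.
Proof.
have yby : (phi y * phi b * (phi y)^-1)%g \in G by rewrite !groupM ?groupV ?mem_phi.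
have [a' def_a'] := phiP yby.
by exists a'; apply: phi_inj; rewrite !phiM -def_a' mulgKV.
Qed.

Section OneRepresentation.

Variables (n : nat) (r : mx_representation F G n).

Lemma mxtrace_Uconj a b y : Umul q y a = Umul q b y -> \tr (r (phi a)) = \tr (r (phi b)).
Proof.
move=> conj_ab; have -> : phi a = (phi b ^ phi y)%g.
  by apply: (mulgI (phi y)); rewrite -phiM conj_ab phiM conjgE !mulgA mulgV mul1g.
by rewrite mxtrace_repr_conjg ?mem_phi.
Qed.

Lemma Ucentral_repr_scalar z : mx_irreducible r ->
  (forall w, Umul q z w = Umul q w z) -> exists l, r (phi z) = l%:M.
Proof.
move=> r_irr z_central; apply/is_scalar_mxP.
apply: (mx_abs_irr_cent_scalar (group_closure_closed_field r_irr)).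
by apply/centgmxP => _ /phiP[w ->]; rewrite -!repr_mxM ?mem_phi // -!phiM z_central.
Qed.

Hypothesis r_top : forall x, r (phi (Utop N x)) = (psi x)%:M.

Lemma mxtrace_U_odd_depth a m : (0 < m <= N)%N -> odd m ->
  Uvanish_below a m -> Ucoef a m != 0 -> \tr (r (phi a)) = 0.
Proof.
move=> mN oddm a_low am0; have [x psix] := psi_conductor.
have [y conj_a] := Uconj_odd_depth cardK x evenN mN oddm a_low am0.
set e := x - x ^+ q in conj_a.
have psie : psi e != 1.
  apply: contra psix => /eqP psie1; apply/eqP.
  by rewrite -{2}[x](subrK (x ^+ q)) psiD psie1 mul1r.
have def_a : phi a = (phi a ^ phi y * phi (Utop N e))%g.
  by apply: (mulgI (phi y)); rewrite -phiM conj_a !phiM conjgE !mulgA mulgV mul1g.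
have : \tr (r (phi a)) = psi e * \tr (r (phi a)).
  rewrite {1}def_a repr_mxM ?groupJ ?mem_phi // r_top mul_mx_scalar mxtraceZ.
  by rewrite mxtrace_repr_conjg ?mem_phi.
move/eqP; rewrite -subr_eq0 -{1}[\tr _]mul1r -mulrBl mulf_eq0 subr_eq0 eq_sym.
by rewrite (negPf psie) => /eqP.
Qed.

End OneRepresentation.

Section TwoRepresentations.

Variables (H : {group gT}) (sHG : H \subset G) (n n' : nat).
Variables (rho : mx_representation F G n) (rho' : mx_representation F G n').
Hypotheses (charF0 : [pchar F] =i pred0) (phiH : H :=: phi @: Uevenset K N).
Hypotheses (rho_irr : mx_irreducible rho) (rho'_irr : mx_irreducible rho').
Hypotheses (rho_top : forall x, rho (phi (Utop N x)) = (psi x)%:M)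
           (rho'_top : forall x, rho' (phi (Utop N x)) = (psi x)%:M).
Hypothesis rhoH : mx_rsim (subg_repr rho sHG) (subg_repr rho' sHG).

Let trace_agree a := \tr (rho (phi a)) = \tr (rho' (phi a)).

Lemma trace_agree_even a d : (N < d)%N -> Uodd_vanish_below a d -> trace_agree a.
Proof.
move=> Nd a_odd; apply: (mxtrace_rsim rhoH); rewrite phiH imset_f // inE.
apply/forallP => j; apply/implyP => oddj; rewrite -Ucoef_ord a_odd //.
by rewrite (leq_ltn_trans (ltn_ord j)).
Qed.

Lemma trace_agree_odd_depth a m : (0 < m <= N)%N -> odd m ->
  Uvanish_below a m -> Ucoef a m != 0 -> trace_agree a.
Proof.
move=> mN oddm a_low am0.
rewrite /trace_agree (mxtrace_U_odd_depth rho_top mN) //.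
by rewrite (mxtrace_U_odd_depth rho'_top mN).
Qed.

Lemma trace_agree_central_depth a m : (0 < m <= N)%N -> ~~ odd m ->
    Ucoef a m ^+ q = Ucoef a m -> Uvanish_below a m ->
    (forall b, Uvanish_below b m.+1 -> trace_agree b) -> trace_agree a.
Proof.
move=> mN evenm cq a_low IH; set z := Umono N m (Ucoef a m).
have z_central w : Umul q z w = Umul q w z by apply: Umono_central.
have [l rho_z] := Ucentral_repr_scalar rho_irr z_central.
have [l' rho'_z] := Ucentral_repr_scalar rho'_irr z_central.
have l_eq : l = l'.
  have : trace_agree z.
    apply: (trace_agree_even (ltnSn N)) => i _ oddi; rewrite Ucoef_Umono //.
    by rewrite eqn0Ngt odd_gt0 //=; case: eqP => // im; rewrite -im oddi in evenm.
  rewrite /trace_agree /= rho_z rho'_z !mxtrace_scalar -(mxrank_rsim rhoH).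
  rewrite -[l *+ _]mulr_natr -[l' *+ _]mulr_natr.
  have n0 : (0 < n)%N by case/mx_irrP: rho_irr.
  by apply: mulIf; rewrite (proj1 (pcharf0P F) charF0) -lt0n.
have [a' def_a] := Umul_divl z a.
rewrite /trace_agree -def_a !phiM !repr_mxM ?mem_phi // rho_z rho'_z l_eq.
rewrite !mul_scalar_mx !mxtraceZ IH //; exact: Uvanish_below_Umono_quot def_a.
Qed.

Lemma trace_agree_noncentral_depth a m : (0 < m)%N -> ~~ odd m ->
  Ucoef a m ^+ q != Ucoef a m -> Uvanish_below a m -> trace_agree a.
Proof.
move=> m0 evenm cq a_low.
suff agree_d d b : Uvanish_below b m -> Ucoef b m = Ucoef a m ->
    Uodd_vanish_below b d -> trace_agree b by apply: (agree_d 1%N) => // [[]].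
elim/(@nat_down_ind N): d b => [d Nd | d dN IH] b b_low bm b_odd.
  exact: trace_agree_even b_odd.
have [oddd | evend] := boolP (odd d); last first.
  by apply: IH => //; apply: Uodd_vanish_belowS => // /(negP evend).
have [md | dm] := ltnP m d; last first.
  apply: IH => //; apply: Uodd_vanish_belowS => // _; apply: b_low.
  by rewrite odd_gt0 // ltn_neqAle dm andbT; apply: contraNneq evenm => <-.
have mdN : (m < d <= N)%N by rewrite md.
have bmq : Ucoef b m ^+ q != Ucoef b m by rewrite bm.
have [y conj_y] := Uconj_odd_vanish cardK m0 evenm mdN oddd bmq b_low b_odd.
have [a' conj_b] := Uconj_exists y b.
have [a'_low a'm a'_odd] := conj_y a' conj_b.
by rewrite /trace_agree !(mxtrace_Uconj _ conj_b) IH // a'm.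
Qed.

Lemma trace_agree_all a : trace_agree a.
Proof.
suff agree_m m b : (0 < m)%N -> Uvanish_below b m -> trace_agree b.
  by apply: (agree_m 1%N) => // i; lia.
elim/(@nat_down_ind N): m b => [m Nm | m mN IH] b m0 b_low.
  exact: trace_agree_even Nm (Uvanish_below_odd b_low).
have mN' : (0 < m <= N)%N by rewrite m0.
have [bm0 | bm0] := eqVneq (Ucoef b m) 0.
  by apply: IH => //; apply: Uvanish_belowS.
have [oddm | evenm] := boolP (odd m).
  exact: trace_agree_odd_depth mN' oddm b_low bm0.
have [cq | cq] := eqVneq (Ucoef b m ^+ q) (Ucoef b m).
  by apply: (trace_agree_central_depth mN' evenm cq b_low) => c; apply: IH.
exact: trace_agree_noncentral_depth m0 evenm cq b_low.
Qed.

Lemma mxtrace_U_eq : {in G, forall g, \tr (rho g) = \tr (rho' g)}.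
Proof. by move=> _ /phiP[a ->]; apply: trace_agree_all. Qed.

End TwoRepresentations.

End Traces.

Theorem corollary3p3
  (p k h : nat) (K : finFieldType) (F : closedFieldType)
  (gT : finGroupType) (G H : {group gT})
  (phi : {ffun 'I_(2 * h.-1) -> K} -> gT) (psi : K -> F)
  (sHG : H \subset G)
  (n n' : nat) (rho : mx_representation F G n) (rho' : mx_representation F G n') :
  prime p -> (0 < k)%N -> #|K| = ((p ^ k) ^ 2)%N -> (2 <= h)%N ->
  [pchar F] =i pred0 ->
  (* G is (a copy of) U_h^{2,q}(F_{q^2}), q = p^k, via the isomorphism phi *)
  injective phi -> G :=: phi @: [set: {ffun 'I_(2 * h.-1) -> K}] ->
  (forall a b, phi (Umul (p ^ k) a b) = (phi a * phi b)%g) ->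
  H :=: phi @: Uevenset K (2 * h.-1) ->
  (* psi is an additive character of conductor q^2 *)
  psi 0 = 1 -> (forall x y, psi (x + y) = psi x * psi y) ->
  (exists x : K, psi (x ^+ (p ^ k)) != psi x) ->
  (* rho, rho' irreducible, H_{2(h-1)} acting via psi *)
  mx_irreducible rho -> mx_irreducible rho' ->
  (forall x : K, rho (phi (Utop (2 * h.-1) x)) = (psi x)%:M) ->
  (forall x : K, rho' (phi (Utop (2 * h.-1) x)) = (psi x)%:M) ->
  mx_rsim (subg_repr rho sHG) (subg_repr rho' sHG) ->
  mx_rsim rho rho'.
Proof.
move=> _ _ cardK _ charF0 phi_inj phiG phiM phiH _ psiD psi_conductor.
move=> rho_irr rho'_irr rho_top rho'_top rhoH.
have evenN : ~~ odd (2 * h.-1) by rewrite mul2n odd_double.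
have := mxtrace_U_eq cardK evenN phi_inj phiG phiM psiD psi_conductor
  charF0 phiH rho_irr rho'_irr rho_top rho'_top rhoH.
exact: mx_rsim_mxtrace_irr.
Qed.
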